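(* Let $S$ be a nonempty set linearly ordered by $<$, made into a commutative semigroup by $m\cdot n=\max\{m,n\}$, equipped with the discrete topology, and having an identity $e$ (necessarily the least element of $S$). For each $n\in S\setminus\{e\}$ let $q_n=\sum_{j\in Q_n}q_n(j)\delta_j$ be a probability measure on $S$ with finite support $Q_n$ containing $e$, where $q_n(j)>0$ for $j\in Q_n$ and $\sum_{j\in Q_n}q_n(j)=1$. Define $*$ on point masses by $\delta_m*\delta_n=\delta_n*\delta_m=\delta_{\max\{m,n\}}$ if $m\neq n$ or $m=n=e$, and $\delta_n*\delta_n=q_n$ for $n\in S\setminus\{e\}$, extended bilinearly. For $n\in S$ put $\mathcal{L}_n=\{k\in S:k<n\}$. Then $(S,* )$ is a hermitian discrete hypergroup if and only if the following hold: (i) either $S$ is finite or $(S,<,\cdot)$ is isomorphic to $(\mathbb{Z}_+,<,\max)$; (ii) for every $n\in S\setminus\{e\}$, $\mathcal{L}_n\subset Q_n\subset\mathcal{L}_n\cup\{n\}$; (iii) if $\#S>2$, then for all $e\neq m<n$ in $S$: (a) $q_n(e)=q_n(m)\,q_m(e)$, and (b) $q_n(e)\bigl(1+\sum_{e\neq k\in\mathcal{L}_n}\frac{1}{q_k(e)}\bigr)\le 1$. Moreover, with $v_e=1$ and $v_n=1/q_n(e)$ for $n\in S\setminus\{e\}$, condition (iii) is equivalent to: (iii)$'$ if $\#S>2$, then for all $e\neq m<n$ in $S$, (a) $q_n(m)=v_m/v_n$ and (b) $\sum_{k\in\mathcal{L}_n}v_k\le v_n$.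
   Context: $\mathbb{Z}_+=\{0,1,2,\dots\}$. For a measure $\mu$ on a discrete set, $\mu(j)$ denotes $\mu(\{j\})$. A hermitian discrete hypergroup is a discrete set $K$ with a map $*$ from $K\times K$ to finitely supported probability measures on $K$ (extended bilinearly to measures), such that: $(\delta_m*\delta_n)*\delta_k=\delta_m*(\delta_n*\delta_k)$ for all $m,n,k$; there is $e\in K$ with $\delta_m*\delta_e=\delta_e*\delta_m=\delta_m$ for all $m$; $\delta_m*\delta_n=\delta_n*\delta_m$ for all $m,n$ (the involution being the identity map); and $e\in\operatorname{spt}(\delta_m*\delta_n)$ if and only if $m=n$. *)

From HB Require Import structures.
From mathcomp Require Import all_boot all_order all_algebra.
From mathcomp Require Import all_classical all_reals.
Set Implicit Arguments. Unset Strict Implicit. Unset Printing Implicit Defensive.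
Import Order.TTheory GRing.Theory Num.Theory.
Local Open Scope classical_set_scope.
Local Open Scope ring_scope.

Section Defs.
Variable R : realType.

Definition dirac (K : eqType) (a : K) : K -> R := fun j => if j == a then 1 else 0.

Definition fprob (K : choiceType) (mu : K -> R) : Prop :=
  [/\ forall j, 0 <= mu j,
      finite_set [set j | mu j != 0] &
      \sum_(j \in [set: K]) mu j = 1].

(* conv m n = delta_m * delta_n (a measure on K, given by its point masses).
   Bilinear extension: (mu * delta_k)(j) = sum_i mu(i) (delta_i * delta_k)(j). *)
Definition hermitian_discrete_hypergroup (K : choiceType) (conv : K -> K -> K -> R) : Prop :=
  [/\ (forall m n, fprob (conv m n)),
      (* (delta_m * delta_n) * delta_k = delta_m * (delta_n * delta_k) *)
      (forall m n k j,
         \sum_(i \in [set: K]) conv m n i * conv i k j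
         = \sum_(i \in [set: K]) conv n k i * conv m i j),
      (exists e : K,
         (forall m, conv m e = dirac m /\ conv e m = dirac m) /\
         (forall m n, conv m n e != 0 <-> m = n)) &
      (forall m n, conv m n = conv n m)].

Variables (d : Order.disp_t) (S : orderType d) (e : S) (q : S -> S -> R).

Definition maxconv (m n : S) : S -> R :=
  if (m != n) || (m == e) then dirac (Order.max m n) else q n.

Definition Lset (n : S) : set S := [set k | (k < n)%O].

Definition Qset (n : S) : set S := [set j | q n j != 0].

Definition card_gt2 : Prop :=
  exists a b c : S, [/\ a != b, a != c & b != c].

Definition cond_i : Prop :=
  finite_set [set: S] \/
  exists f : S -> nat, [/\ bijective f,
    (forall x y, (x < y)%O = (f x < f y)%N) &
    (forall x y, f (Order.max x y) = maxn (f x) (f y))].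

Definition cond_ii : Prop :=
  forall n, n != e -> Lset n `<=` Qset n /\ Qset n `<=` Lset n `|` [set n].

Definition cond_iii : Prop :=
  card_gt2 -> forall m n : S, m != e -> (m < n)%O ->
    q n e = q n m * q m e /\
    q n e * (1 + \sum_(k \in [set k | (k < n)%O /\ k != e]) (q k e)^-1) <= 1.

Definition vv (n : S) : R := if n == e then 1 else (q n e)^-1.

Definition cond_iii' : Prop :=
  card_gt2 -> forall m n : S, m != e -> (m < n)%O ->
    q n m = vv m / vv n /\
    \sum_(k \in Lset n) vv k <= vv n.

End Defs.

From HB Require Import structures.
From mathcomp Require Import all_boot all_order all_algebra.
From mathcomp Require Import all_classical all_reals finmap.
Set Implicit Arguments. Unset Strict Implicit. Unset Printing Implicit Defensive.
Import Order.TTheory GRing.Theory Num.Theory.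
Local Open Scope classical_set_scope.
Local Open Scope ring_scope.

(* Evaluating associativity (δ_n * δ_n) * δ_k = (δ_n * δ_k) * δ_n at e gives
   q_n(k) q_k(e) = (δ_max(n,k) * δ_n)(e).  For k < n this is the factorisation
   q_n(e) = q_n(k) q_k(e), so q_n charges all of L_n; for n < k it forces
   q_n(k) = 0.  Hence every initial segment L_n is finite, ranking S by #L_n
   shows that S is finite or order-isomorphic to Z_+, and summing the
   factorisation over L_n against sum_j q_n(j) = 1 gives (iii)(b).
   Conversely, under (ii) and (iii)(a) the factorisation propagates to
   q_n(i) = q_n(k) q_k(i) for i < k < n; then q_n * δ_k is δ_k for n < k and
   q_n for k < n, which settles associativity in the only nontrivial cases,
   those where two of the three points coincide. *)

Section Dirac.
Variables (R : realType) (K : choiceType).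

Lemma dirac_neq (a j : K) : j != a -> dirac R a j = 0.
Proof. by rewrite /dirac => /negbTE ->. Qed.

Lemma fsbig_dirac_l (x : K) (f : K -> R) :
  \sum_(i \in [set: K]) dirac R x i * f i = f x.
Proof.
rewrite -(fsbig_widen [set x]) // ?fsbig_set1 /dirac ?eqxx ?mul1r //.
by move=> i [_ /eqP /negbTE /= ->]; rewrite mul0r.
Qed.

Lemma fsbig_dirac_r (x : K) (f : K -> R) :
  \sum_(i \in [set: K]) f i * dirac R i x = f x.
Proof.
rewrite -[RHS](fsbig_dirac_l x f); apply: eq_fsbigr => i _.
by rewrite mulrC /dirac eq_sym.
Qed.

Lemma fprob_dirac (x : K) : fprob (dirac R x).
Proof.
split=> [j | | ]; first by rewrite /dirac; case: ifP.
  apply: sub_finite_set (finite_set1 x) => j /=; rewrite /dirac.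
  by case: (eqVneq j x) => // _; rewrite eqxx.
by rewrite -[RHS](fsbig_dirac_l x (fun=> 1)); apply: eq_fsbigr => i _; rewrite mulr1.
Qed.

End Dirac.

Lemma fsbig_le_setT (R : numDomainType) (T : choiceType) (A : set T) (f : T -> R) :
  (forall i, 0 <= f i) -> finite_set [set j | f j != 0] ->
  \sum_(i \in A) f i <= \sum_(i \in [set: T]) f i.
Proof.
move=> f_ge0 f_fin.
have f_fin' : finite_set (f @^-1` [set~ 0]) by apply: sub_finite_set f_fin => x /= /eqP.
rewrite fsbig_supp [leRHS]fsbig_supp setTI [leRHS](fsbigID A) // setIC lerDl.
exact: fsumr_ge0.
Qed.

Lemma fsbig_infinite (R : numDomainType) (T : choiceType) (A : set T) (f : T -> R) :
  infinite_set A -> (forall k, A k -> f k != 0) -> \sum_(k \in A) f k = 0.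
Proof.
move=> A_inf f_neq0; apply: fsbig_dflt; apply: contra_not A_inf.
by apply: sub_finite_set => k Ak; split => //; apply/eqP/f_neq0.
Qed.

Section InitialSegments.
Variables (d : Order.disp_t) (S : orderType d) (e : S).
Hypothesis he : forall x : S, (e <= x)%O.

Lemma Lset_bottom : Lset e = set0.
Proof. by apply/seteqP; split => // k; rewrite /Lset /= ltNge he. Qed.

Hypothesis finite_Lset : forall x : S, finite_set (Lset x).

Let rank (x : S) : nat := #|` fset_set (Lset x)|.

Lemma rank_lt x y : (x < y)%O -> (rank x < rank y)%N.
Proof.
move=> xy; apply: fproper_ltn_card; rewrite fproperE; apply/andP; split.
  by rewrite -fset_set_sub // => k /lt_trans; apply.
by apply/negP; rewrite -fset_set_sub // => /(_ x xy); rewrite /Lset /= ltxx.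
Qed.

Lemma rank_ltE x y : (rank x < rank y)%N = (x < y)%O.
Proof.
case: (ltgtP x y) => [/rank_lt // | /rank_lt yx | ->]; last exact: ltnn.
by apply/negbTE; rewrite -leqNgt ltnW.
Qed.

Lemma rank_leE x y : (rank x <= rank y)%N = (x <= y)%O.
Proof. by rewrite leqNgt rank_ltE leNgt. Qed.

Lemma rank_inj : injective rank.
Proof. by move=> x y rxy; apply/eqP; rewrite eq_le -!rank_leE rxy leqnn. Qed.

Lemma exists_cover x y : (x < y)%O ->
  exists2 z, (x < z)%O & forall w : S, (w < z)%O = (w <= x)%O.
Proof.
have [N] := ubnP (rank y); elim: N y => // N IH y; rewrite ltnS => ryN xy.
have [[w xw wy] | nw] := pselect (exists2 w, (x < w)%O & (w < y)%O).
  by apply: (IH w) => //; apply: leq_trans ryN; rewrite rank_ltE.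
exists y => // w; apply/idP/idP => [wy | /le_lt_trans]; last exact.
by rewrite leNgt; apply/negP => xw; apply: nw; exists w.
Qed.

Lemma rank_cover x z : (forall w : S, (w < z)%O = (w <= x)%O) -> rank z = (rank x).+1.
Proof.
move=> cover; rewrite /rank; have -> : Lset z = x |` Lset x.
  apply/seteqP; split => w; rewrite /Lset /= cover le_eqVlt.
    by case/orP => [/eqP|]; [left | right].
  by case=> [->|->]; rewrite ?eqxx ?orbT.
by rewrite fset_setU1 // cardfsU1 in_fset_set // memNset // /Lset /= ltxx.
Qed.

Lemma rank_surj : infinite_set [set: S] -> forall N, exists x, rank x = N.
Proof.
move=> S_inf; elim=> [|N [x <-]].
  by exists e; rewrite /rank Lset_bottom fset_set0 cardfs0.
have [y xy] : exists y, (x < y)%O.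
  apply: contrapT => no_y; apply: S_inf; apply: (@sub_finite_set _ _ (x |` Lset x)).
    by move=> y _; case: (ltgtP y x) => [|xy|->]; [right | case: no_y; exists y | left].
  by rewrite finite_setU; split; [exact: finite_set1 | exact: finite_Lset].
by have [z _ /rank_cover <-] := exists_cover xy; exists z.
Qed.

Lemma cond_i_of_finite_Lset : cond_i S.
Proof.
have [S_fin | S_inf] := pselect (finite_set [set: S]); [by left | right].
have [g rankK] := choice (rank_surj S_inf).
exists rank; split => [|x y|x y]; last 2 first.
- by rewrite rank_ltE.
- case: (leP x y) => [xy | /ltW yx].
    by apply/esym/maxn_idPr; rewrite rank_leE.
  by apply/esym/maxn_idPl; rewrite rank_leE.
by exists g => [x|N]; [apply: rank_inj; rewrite rankK | exact: rankK].
Qed.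

End InitialSegments.

Section MaxConvolution.
Variables (R : realType) (d : Order.disp_t) (S : orderType d) (e : S) (q : S -> S -> R).
Hypothesis he : forall x : S, (e <= x)%O.
Hypothesis hq_ge0 : forall n j : S, n != e -> 0 <= q n j.
Hypothesis hq_fin : forall n : S, n != e -> finite_set [set j | q n j != 0].
Hypothesis hq_e : forall n : S, n != e -> 0 < q n e.
Hypothesis hq_sum : forall n : S, n != e -> \sum_(j \in [set: S]) q n j = 1.

Local Notation conv := (maxconv e q).

Lemma neq_bottom_gt n : n != e -> (e < n)%O.
Proof. by rewrite lt_neqAle eq_sym he andbT. Qed.

Lemma gt_neq_bottom x y : (x < y)%O -> y != e.
Proof. by move=> xy; rewrite gt_eqF // (le_lt_trans (he x)). Qed.

Lemma max_neq_bottom m n : n != e -> Order.max m n != e.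
Proof. by move=> /neq_bottom_gt en; rewrite gt_eqF // (lt_le_trans en) // le_max lexx orbT. Qed.

Lemma maxconv_neq m n : m != n -> conv m n = dirac R (Order.max m n).
Proof. by rewrite /maxconv => ->. Qed.

Lemma maxconv_diag n : n != e -> conv n n = q n.
Proof. by move=> ne; rewrite /maxconv eqxx (negbTE ne). Qed.

Lemma maxconvC m n : conv m n = conv n m.
Proof.
by case: (eqVneq m n) => [-> // | mn]; rewrite maxconv_neq // maxconv_neq 1?eq_sym // maxC.
Qed.

Lemma maxconv_e m : conv m e = dirac R m.
Proof.
case: (eqVneq m e) => [->|me]; first by rewrite /maxconv eqxx orbT maxxx.
by rewrite maxconv_neq // max_l.
Qed.

Lemma maxconv_at_e m n : conv m n e != 0 <-> m = n.
Proof.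
case: (eqVneq m n) => [<- | mn].
  split=> // _; case: (eqVneq m e) => [-> | me].
    by rewrite maxconv_e /dirac eqxx oner_neq0.
  by rewrite maxconv_diag // gt_eqF ?hq_e.
split=> [|/eqP]; last by rewrite (negbTE mn).
rewrite maxconv_neq // dirac_neq ?eqxx // eq_sym.
case: (eqVneq n e) => [nE | ne]; last exact: max_neq_bottom.
by rewrite maxC max_neq_bottom // -nE.
Qed.

Lemma fprob_maxconv m n : fprob (conv m n).
Proof.
rewrite /maxconv; case: ifP => [_ | /negbT]; first exact: fprob_dirac.
rewrite negb_or negbK => /andP[/eqP -> ne].
by split=> [j | |]; [exact: hq_ge0 | exact: hq_fin | exact: hq_sum].
Qed.

Definition conv_dirac (mu : S -> R) (k : S) : S -> R :=
  fun j => \sum_(i \in [set: S]) mu i * conv i k j.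

Lemma conv_dirac_dirac x k : conv_dirac (dirac R x) k = conv x k.
Proof. by apply/funext => j; rewrite /conv_dirac fsbig_dirac_l. Qed.

Lemma conv_dirac_e mu : conv_dirac mu e = mu.
Proof.
apply/funext => j; rewrite /conv_dirac -[RHS](fsbig_dirac_r j mu).
by apply: eq_fsbigr => i _; rewrite maxconv_e.
Qed.

Lemma conv_dirac_neq m n k : m != n -> conv_dirac (conv m n) k = conv (Order.max m n) k.
Proof. by move=> mn; rewrite maxconv_neq // conv_dirac_dirac. Qed.

Lemma conv_dirac_at_e mu k : k != e -> conv_dirac mu k e = mu k * q k e.
Proof.
move=> ke; rewrite /conv_dirac -[RHS](fsbig_dirac_l k (fun=> mu k * q k e)).
apply: eq_fsbigr => i _; case: (eqVneq i k) => [-> | ik].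
  by rewrite maxconv_diag // /dirac eqxx mul1r.
have eik : e != Order.max i k by rewrite eq_sym max_neq_bottom.
by rewrite maxconv_neq // !dirac_neq // mulr0 mul0r.
Qed.

Lemma maxconv_assocE :
  (forall m n k j, \sum_(i \in [set: S]) conv m n i * conv i k j
                   = \sum_(i \in [set: S]) conv n k i * conv m i j) <->
  (forall m n k, conv_dirac (conv m n) k = conv_dirac (conv n k) m).
Proof.
have E m n k j : \sum_(i \in [set: S]) conv n k i * conv m i j = conv_dirac (conv n k) m j.
  by rewrite /conv_dirac; apply: eq_fsbigr => i _; rewrite [conv m i]maxconvC.
split=> [assoc m n k | assoc m n k j]; last by rewrite E -assoc.
by apply/funext => j; rewrite -[RHS]E -assoc.
Qed.

Section Necessity.
Hypothesis assoc : forall m n k, conv_dirac (conv m n) k = conv_dirac (conv n k) m.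

Lemma q_mul_q_e n k : n != e -> k != e -> n != k ->
  q n k * q k e = conv (Order.max n k) n e.
Proof.
move=> ne ke nk.
by rewrite -(conv_dirac_at_e (q n) ke) -(maxconv_diag ne) assoc conv_dirac_neq.
Qed.

Lemma q_factor_e k n : k != e -> (k < n)%O -> q n e = q n k * q k e.
Proof.
move=> ke kn; have ne := gt_neq_bottom kn.
by rewrite q_mul_q_e ?(gt_eqF kn) // max_l ?ltW // maxconv_diag.
Qed.

Lemma q_above n k : n != e -> (n < k)%O -> q n k = 0.
Proof.
move=> ne nk; have ke := gt_neq_bottom nk; have ek : e != k by rewrite eq_sym.
have /eqP := q_mul_q_e ne ke (negbT (lt_eqF nk)).
rewrite max_r ?ltW // maxconv_neq ?(gt_eqF nk) // max_l ?ltW // dirac_neq //.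
by rewrite mulf_eq0 (gt_eqF (hq_e ke)) orbF => /eqP.
Qed.

Lemma cond_ii_of_assoc : cond_ii e q.
Proof.
move=> n ne; split => k; rewrite /Qset /Lset /= => kn.
  case: (eqVneq k e) => [-> | ke]; first by rewrite gt_eqF ?hq_e.
  apply: contraTneq (hq_e ne) => qk0.
  by rewrite (q_factor_e ke kn) qk0 mul0r ltxx.
case: (ltgtP k n) => [| nk | ->]; [by left | | by right].
by move: kn; rewrite q_above ?eqxx.
Qed.

Lemma finite_Lset_of_assoc (x : S) : finite_set (Lset x).
Proof.
case: (eqVneq x e) => [-> | xe]; first by rewrite (Lset_bottom he).
exact: sub_finite_set (proj1 (cond_ii_of_assoc xe)) (hq_fin xe).
Qed.

Lemma cond_iii_of_assoc : cond_iii e q.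
Proof.
move=> _ m n me mn; split; first exact: q_factor_e.
have ne := gt_neq_bottom mn.
rewrite mulrDr mulr1 mulr_fsumr.
under eq_fsbigr => k /set_mem [kn ke] do
  rewrite (q_factor_e ke kn) mulfK ?gt_eqF ?hq_e //.
have -> : [set k | (k < n)%O /\ k != e] = Lset n `\ e.
  by apply/seteqP; split => k /= [kn ke]; split => //; apply/eqP.
rewrite -fsbigD1; [| exact: finite_Lset_of_assoc | exact: neq_bottom_gt].
rewrite -(hq_sum ne); apply: fsbig_le_setT _ (hq_fin ne) => j; exact: hq_ge0.
Qed.

End Necessity.

Section Sufficiency.
Hypothesis hq_above : forall n k, n != e -> (n < k)%O -> q n k = 0.
Hypothesis hq_factor_e : forall k n, k != e -> (k < n)%O -> q n e = q n k * q k e.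

Lemma q_factor m n i : m != e -> (m < n)%O -> (i < m)%O -> q n i = q n m * q m i.
Proof.
move=> me mn im; case: (eqVneq i e) => [-> | ie]; first exact: hq_factor_e.
apply: (mulIf (lt0r_neq0 (hq_e ie))).
by rewrite -(hq_factor_e ie (lt_trans im mn)) -mulrA -(hq_factor_e ie im) (hq_factor_e me mn).
Qed.

Lemma conv_dirac_q_lt n k : n != e -> (n < k)%O -> conv_dirac (q n) k = dirac R k.
Proof.
move=> ne nk; apply/funext => j; rewrite /conv_dirac.
rewrite -[RHS]mul1r -(hq_sum ne) mulr_fsuml; apply: eq_fsbigr => i _.
case: (ltP i k) => [ik | ki]; first by rewrite maxconv_neq ?lt_eqF // max_r // ltW.
by rewrite hq_above ?mul0r // (lt_le_trans nk).
Qed.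

Lemma conv_dirac_q_gt n k : k != e -> (k < n)%O -> conv_dirac (q n) k = q n.
Proof.
move=> ke kn; apply/funext => j; rewrite /conv_dirac.
case: (ltgtP j k) => [jk | kj | ->].
- rewrite -[RHS](fsbig_dirac_l k (fun=> q n j)); apply: eq_fsbigr => i _.
  case: (eqVneq i k) => [-> | ik].
    by rewrite maxconv_diag // /dirac eqxx mul1r -q_factor.
  have jik : j != Order.max i k by rewrite lt_eqF // (lt_le_trans jk) // le_max lexx orbT.
  by rewrite maxconv_neq // !dirac_neq // mulr0 mul0r.
- rewrite -[RHS](fsbig_dirac_l j (q n)); apply: eq_fsbigr => i _.
  case: (ltgtP i k) => [ik | ki | ->].
  + have ij : i != j by rewrite lt_eqF // (lt_trans ik).
    have jk : j != k by rewrite gt_eqF.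
    by rewrite maxconv_neq ?lt_eqF // max_r ?ltW // !dirac_neq // mulr0 mul0r.
  + by rewrite maxconv_neq ?gt_eqF // max_l ?ltW // mulrC /dirac eq_sym.
  + have kj' : k != j by rewrite lt_eqF.
    by rewrite maxconv_diag // (hq_above ke kj) mulr0 dirac_neq // mul0r.
- rewrite -[RHS]mulr1 -(hq_sum ke) mulr_fsumr; apply: eq_fsbigr => i _.
  case: (ltgtP i k) => [ik | ki | ->]; last by rewrite maxconv_diag.
  + by rewrite maxconv_neq ?lt_eqF // max_r ?ltW // /dirac eqxx mulr1 -q_factor.
  + have ik : k != i by rewrite lt_eqF.
    by rewrite maxconv_neq ?gt_eqF // max_l ?ltW // dirac_neq // (hq_above ke ki) !mulr0.
Qed.

Lemma conv_dirac_q n k : n != e -> k != e -> n != k ->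
  conv_dirac (q n) k = conv (Order.max n k) n.
Proof.
move=> ne ke; case: (ltgtP n k) => // [nk | kn] _.
  by rewrite conv_dirac_q_lt // maxconv_neq ?gt_eqF // max_l ?ltW.
by rewrite conv_dirac_q_gt // maxconv_diag.
Qed.

Lemma maxconv_assoc m n k : conv_dirac (conv m n) k = conv_dirac (conv n k) m.
Proof.
case: (eqVneq m e) => [-> | me].
  by rewrite [conv e n]maxconvC maxconv_e conv_dirac_dirac conv_dirac_e.
case: (eqVneq n e) => [-> | ne].
  by rewrite maxconv_e [conv e k]maxconvC maxconv_e !conv_dirac_dirac maxconvC.
case: (eqVneq k e) => [-> | ke].
  by rewrite conv_dirac_e maxconv_e conv_dirac_dirac maxconvC.
case: (eqVneq m n) => [<- | mn].
  case: (eqVneq m k) => [<- // | mk].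
  by rewrite maxconv_diag // conv_dirac_q // conv_dirac_neq.
case: (eqVneq n k) => [<- | nk].
  have nm : n != m by rewrite eq_sym.
  by rewrite conv_dirac_neq // maxconv_diag // conv_dirac_q // maxC.
rewrite !conv_dirac_neq //; case: (eqVneq m k) => [<- | mk]; first by rewrite maxC.
have mnk : Order.max m n != k by case: leP.
have nkm : Order.max n k != m by case: leP; rewrite eq_sym.
by rewrite !maxconv_neq // [in RHS]maxC maxA.
Qed.

End Sufficiency.

Lemma q_above_of_cond_ii : cond_ii e q -> forall n k, n != e -> (n < k)%O -> q n k = 0.
Proof.
move=> hii n k ne nk; apply/eqP; apply: contraT => /(proj2 (hii n ne)) [/= kn | /= kn].
  by move: (lt_trans nk kn); rewrite ltxx.
by move: nk; rewrite kn ltxx.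
Qed.

Lemma q_factor_e_of_cond_iii :
  cond_iii e q -> forall k n, k != e -> (k < n)%O -> q n e = q n k * q k e.
Proof.
move=> hiii k n ke kn; apply: (proj1 (hiii _ k n ke kn)).
by exists e, k, n; rewrite eq_sym ke eq_sym (gt_neq_bottom kn) (lt_eqF kn).
Qed.

Lemma hypergroup_of_conds :
  cond_ii e q -> cond_iii e q -> hermitian_discrete_hypergroup conv.
Proof.
move=> hii hiii; split.
- exact: fprob_maxconv.
- apply/maxconv_assocE.
  exact: maxconv_assoc (q_above_of_cond_ii hii) (q_factor_e_of_cond_iii hiii).
- exists e; split=> [m | m n]; last exact: maxconv_at_e.
  by rewrite [conv e m]maxconvC maxconv_e.
- exact: maxconvC.
Qed.

Lemma conds_of_hypergroup :
  hermitian_discrete_hypergroup conv -> [/\ cond_i S, cond_ii e q & cond_iii e q].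
Proof.
case=> _ /maxconv_assocE assoc _ _; split.
- exact: cond_i_of_finite_Lset he (finite_Lset_of_assoc assoc).
- exact: cond_ii_of_assoc.
- exact: cond_iii_of_assoc.
Qed.

Lemma vv_neq_e n : n != e -> vv e q n = (q n e)^-1.
Proof. by rewrite /vv => /negbTE ->. Qed.

Lemma q_e_le1 n : n != e -> q n e <= 1.
Proof.
move=> ne; have -> : q n e = \sum_(j \in [set e]) q n j by rewrite fsbig_set1.
by rewrite -(hq_sum ne); apply: fsbig_le_setT (hq_fin ne) => j; exact: hq_ge0.
Qed.

Lemma factor_e_iff m n : m != e -> (m < n)%O ->
  q n e = q n m * q m e <-> q n m = vv e q m / vv e q n.
Proof.
move=> me mn; rewrite !vv_neq_e ?(gt_neq_bottom mn) // invrK.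
have qme : q m e != 0 by rewrite gt_eqF ?hq_e.
by split=> ->; [rewrite mulrC mulfK | rewrite mulrAC mulVf ?mul1r].
Qed.

Lemma sum_bound_iff n : n != e ->
  q n e * (1 + \sum_(k \in [set k | (k < n)%O /\ k != e]) (q k e)^-1) <= 1 <->
  \sum_(k \in Lset n) vv e q k <= vv e q n.
Proof.
move=> ne; rewrite vv_neq_e //.
have -> : [set k | (k < n)%O /\ k != e] = Lset n `\ e.
  by apply/seteqP; split => k /= [kn ke]; split => //; apply/eqP.
have vvE : \sum_(k \in Lset n `\ e) vv e q k = \sum_(k \in Lset n `\ e) (q k e)^-1.
  by apply: eq_fsbigr => k /set_mem [_ /eqP ke]; exact: vv_neq_e.
have [Ln_fin | Ln_inf] := pselect (finite_set (Lset n)).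
  rewrite [in X in _ <-> X](fsbigD1 e) //; last exact: (neq_bottom_gt ne).
  by rewrite vvE [vv e q e]/vv eqxx -[(q n e)^-1]mulr1 ler_pdivlMl ?hq_e.
(* For infinite L_n both sums are 0 by convention and both sides hold. *)
have LnD_inf : infinite_set (Lset n `\ e) by apply: infinite_setD => //; exact: finite_set1.
rewrite !fsbig_infinite //.
- rewrite addr0 mulr1 invr_ge0; split=> _; [exact: ltW (hq_e ne) | exact: q_e_le1].
- move=> k; rewrite /vv; case: (eqVneq k e) => [_ _ | ke _] /=; first exact: oner_neq0.
  by rewrite invr_neq0 // gt_eqF ?hq_e.
- by move=> k [_ /eqP ke]; rewrite invr_neq0 // gt_eqF ?hq_e.
Qed.

Lemma cond_iii_iff : cond_iii e q <-> cond_iii' e q.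
Proof.
split=> H S3 m n me mn; have [factor bound] := H S3 m n me mn;
  split; by [apply/(factor_e_iff me mn) | apply/(sum_bound_iff (gt_neq_bottom mn))].
Qed.

End MaxConvolution.

Theorem theorem3p2 (R : realType) (d : Order.disp_t) (S : orderType d)
  (e : S) (q : S -> S -> R)
  (he : forall x : S, (e <= x)%O)
  (hq_ge0 : forall n j : S, n != e -> 0 <= q n j)
  (hq_fin : forall n : S, n != e -> finite_set [set j | q n j != 0])
  (hq_e : forall n : S, n != e -> 0 < q n e)
  (hq_sum : forall n : S, n != e -> \sum_(j \in [set: S]) q n j = 1) :
  (hermitian_discrete_hypergroup (maxconv e q) <->
     [/\ cond_i S, cond_ii e q & cond_iii e q]) /\
  (cond_iii e q <-> cond_iii' e q).
Proof.
split; last exact: cond_iii_iff.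
split=> [|[_ hii hiii]]; first exact: conds_of_hypergroup.
exact: hypergroup_of_conds.
Qed.
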